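(* Let $\Omega_m$ be a finite set with $m$ elements, $\mathcal F=2^{\Omega_m}$. (a) For any set function $v:2^{\Omega_m}\to[0,\infty)$ and $A,B\subset\Omega_m$, if $A=\emptyset$, or $B=\emptyset$, or $A=\Omega_m$, or $B=\Omega_m$, or $A\subset B$, or $A\supset B$, or $A=B$, then $v(A\cap B)+v(A\cup B)=v(A)+v(B)$. (b) Let $v_0:2^{\Omega_m}\to[0,\infty)$ be non-decreasing with $v_0(\emptyset)=0$ and define $v_{n+1}(A)=\sup_{\mathcal I\in\Sigma}\mu_{v_n,\mathcal I}(A)$, $A\subset\Omega_m$, $n\ge0$. Then for every $n\ge1$ and $A,B\subset\Omega_m$, if $A\cap B=\emptyset$, or $A\cup B=\Omega_m$, or $|A|=1$, or $|A|=m-1$, then $v_n(A\cap B)+v_n(A\cup B)\le v_n(A)+v_n(B)$.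
   Context: $\Sigma$ denotes the set of all chains $\mathcal I\subset 2^{\Omega_m}$ (totally ordered by inclusion) containing $\emptyset$ and $\Omega_m$ and generating $2^{\Omega_m}$ as a $\sigma$-algebra (equivalently, maximal chains $\{\emptyset,\{\omega_{i_1}\},\{\omega_{i_1},\omega_{i_2}\},\dots,\Omega_m\}$ for an ordering $\omega_{i_1},\dots,\omega_{i_m}$ of $\Omega_m$). For non-decreasing $v$ and $\mathcal I\in\Sigma$, $\mu_{v,\mathcal I}$ is the unique (additive) measure on $2^{\Omega_m}$ with $\mu_{v,\mathcal I}(I)=v(I)$ for all $I\in\mathcal I$. A set function is non-decreasing if $v(A)\le v(B)$ for $A\subset B$. *)

From HB Require Import structures.
From mathcomp Require Import reals.
From mathcomp Require Import all_boot all_order all_algebra.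
Set Implicit Arguments. Unset Strict Implicit. Unset Printing Implicit Defensive.
Import Order.TTheory GRing.Theory Num.Theory.
Local Open Scope ring_scope.

(* A family of subsets of T is a sigma-algebra (T finite, so finite unions suffice). *)
Definition is_sigma_algebra (T : finType) (F : {set {set T}}) : Prop :=
  set0 \in F /\ (forall A, A \in F -> ~: A \in F) /\
  (forall A B, A \in F -> B \in F -> A :|: B \in F).

Definition in_gen_sigma (T : finType) (G : {set {set T}}) (S : {set T}) : Prop :=
  forall F : {set {set T}}, is_sigma_algebra F -> G \subset F -> S \in F.

Definition is_chain (T : finType) (C : {set {set T}}) : Prop :=
  forall A B, A \in C -> B \in C -> (A \subset B) || (B \subset A).

Definition Sigma_chain (T : finType) (C : {set {set T}}) : Prop :=
  is_chain C /\ set0 \in C /\ [set: T] \in C /\ (forall S, in_gen_sigma C S).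

Definition nondecreasing_sf (T : finType) (R : realType) (v : {set T} -> R) : Prop :=
  forall A B : {set T}, A \subset B -> v A <= v B.

Definition additive_sf (T : finType) (R : realType) (mu : {set T} -> R) : Prop :=
  mu set0 = 0 /\
  (forall A B : {set T}, [disjoint A & B] -> mu (A :|: B) = mu A + mu B).

(* mu is the (unique) additive measure mu_{v,C} agreeing with v on the chain C *)
Definition is_mu_v_I (T : finType) (R : realType) (v : {set T} -> R)
    (C : {set {set T}}) (mu : {set T} -> R) : Prop :=
  additive_sf mu /\ (forall I, I \in C -> mu I = v I).

Definition sup_chain_measures (T : finType) (R : realType) (v : {set T} -> R)
    (A : {set T}) : R :=
  sup (fun x : R => exists (C : {set {set T}}) (mu : {set T} -> R),
         Sigma_chain C /\ is_mu_v_I v C mu /\ x = mu A).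

From HB Require Import structures.
From mathcomp Require Import reals.
From mathcomp Require Import all_boot all_order all_algebra.
From mathcomp Require Import lra.
From Stdlib Require Import Classical.
Set Implicit Arguments. Unset Strict Implicit. Unset Printing Implicit Defensive.
Import Order.TTheory GRing.Theory Num.Theory.
Local Open Scope ring_scope.

(* Every measure mu_{v,I} is additive, hence modular, and all of them agree
   with v on the empty set and on the whole space.  The function v_{n+1} is
   their pointwise supremum; the supremum of a sum is at most the sum of the
   suprema, which gives submodularity for disjoint pairs and for pairs
   covering the space.  When |A| = 1 or |A| = m - 1 the pair (A, B) is of one
   of these kinds or comparable by inclusion, and for comparable pairs every
   set function is modular.  The suprema are genuine (the family of measures
   is bounded) because a generating chain separates points: each singleton
   {a} is the difference of two consecutive members I' = {a} u I'' of the
   chain, so mu_{v,I}({a}) = v(I') - v(I'') is bounded independently of the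
   chain.  Nothing is used about v_n beyond its being a real set function. *)

Section SetFunctions.
Variables (T : finType) (R : realType).

Lemma modular_comparable (v : {set T} -> R) (A B : {set T}) :
  (A \subset B) || (B \subset A) -> v (A :&: B) + v (A :|: B) = v A + v B.
Proof.
case/orP => [AB|BA]; first by rewrite (setIidPl AB) (setUidPr AB).
by rewrite (setIidPr BA) (setUidPl BA) addrC.
Qed.

Lemma additive_sf_modular (mu : {set T} -> R) (A B : {set T}) :
  additive_sf mu -> mu (A :&: B) + mu (A :|: B) = mu A + mu B.
Proof.
move=> [_ muD].
have disjD (X : {set T}) : X \subset B -> [disjoint X & A :\: B].
  by move=> XB; apply: disjointWl XB _; rewrite disjoints_subset setCD subsetUr.
have eAB : A :|: B = B :|: (A :\: B).
  by apply/setP => x; rewrite !inE; case: (x \in B); rewrite /= ?orbT ?andbT // orbC.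
rewrite -{3}(setID A B) eAB !muD ?disjD ?subsetIr //.
by rewrite addrA addrAC.
Qed.

Lemma additive_sf_sum1 (mu : {set T} -> R) (A : {set T}) :
  additive_sf mu -> mu A = \sum_(a in A) mu [set a].
Proof.
move=> [mu0 muD]; move cardA: #|A| => n; elim: n A cardA => [|n IH] A cardA.
  by move/eqP: cardA; rewrite cards_eq0 => /eqP ->; rewrite big_set0 mu0.
have /card_gt0P [a aA] : (0 < #|A|)%N by rewrite cardA.
rewrite (big_setD1 a aA) /= -IH; last by move: (cardsD1 a A); rewrite aA cardA => -[].
by rewrite -muD ?setD1K // disjoints1 !inE eqxx.
Qed.

End SetFunctions.

Section GeneratingChains.
Variables (T : finType) (C : {set {set T}}).
Hypothesis chainC : Sigma_chain C.

(* The sets all of whose points are separated by C from all points outside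
   form a sigma-algebra containing C, hence contain every singleton. *)
Lemma Sigma_chain_separates (a b : T) :
  a != b -> exists2 I, I \in C & (a \in I) != (b \in I).
Proof.
have [_ [_ [_ genC]]] := chainC; move=> ab.
pose separated x y := [exists I in C, (x \in I) != (y \in I)].
pose F := [set X : {set T} | [forall x, forall y,
                               (x \in X) && (y \notin X) ==> separated x y]].
have separated_sym x y : separated x y = separated y x.
  by apply/existsP/existsP => -[I /andP[IC xy]]; exists I; rewrite IC eq_sym.
have inFP (X : {set T}) :
    reflect (forall x y, x \in X -> y \notin X -> separated x y) (X \in F).
  rewrite inE; apply: (iffP forallP) => [sepX x y xX yX | sepX x].
    by have /forallP/(_ y)/implyP := sepX x; apply; rewrite xX.
  by apply/forallP => y; apply/implyP => /andP[]; apply: sepX.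
have sigmaF : is_sigma_algebra F.
  split; first by apply/inFP => x y; rewrite inE.
  split=> [X /inFP sepX | X Y /inFP sepX /inFP sepY]; apply/inFP => x y.
    by rewrite !inE negbK separated_sym => xX yX; apply: sepX.
  rewrite !inE negb_or => /orP[xX | xY] /andP[yX yY]; [exact: sepX | exact: sepY].
have CF : C \subset F.
  apply/subsetP => I IC; apply/inFP => x y xI yI; apply/existsP; exists I.
  by rewrite IC xI (negbTE yI).
have /inFP/(_ a b) : [set a] \in F by apply: genC.
by rewrite !inE eqxx eq_sym ab => /(_ isT isT) /existsP[I /andP[IC sepI]]; exists I.
Qed.

Lemma Sigma_chain_atom (a : T) :
  exists I J, [/\ I \in C, J \in C, a \notin J & I = a |: J].
Proof.
have [totC [C0 [CT _]]] := chainC.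
have Ca : ([set: T] \in C) && (a \in [set: T]) by rewrite CT inE.
have Cna : (set0 \in C) && (a \notin set0) by rewrite C0 inE.
have [I /andP[IC aI] minI] :=
  @arg_minnP _ _ (fun I => (I \in C) && (a \in I)) (fun I => #|I|) Ca.
have [J /andP[JC aJ] maxJ] :=
  @arg_maxnP _ _ (fun J => (J \in C) && (a \notin J)) (fun J => #|J|) Cna.
have I_min K : K \in C -> a \in K -> I \subset K.
  move=> KC aK; case/orP: (totC _ _ IC KC) => // KI.
  have cardIK : (#|I| <= #|K|)%N by apply: minI; rewrite KC aK.
  by have /eqP -> : K == I by rewrite eqEcard KI cardIK.
have J_max K : K \in C -> a \notin K -> K \subset J.
  move=> KC aK; case/orP: (totC _ _ JC KC) => // JK.
  have cardKJ : (#|K| <= #|J|)%N by apply: maxJ; rewrite KC aK.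
  by have /eqP <- : J == K by rewrite eqEcard JK cardKJ.
exists I, J; split=> //; apply/setP => x; rewrite !inE.
have [-> //|xa /=] := eqVneq x a; apply/idP/idP => [xI | xJ].
  apply: contraT => xJ; have [K KC] := Sigma_chain_separates xa.
  case aK: (a \in K) => sepK.
    by move: (subsetP (I_min K KC aK) x xI) sepK => ->.
  by move: sepK; rewrite (negbTE (contra (subsetP (J_max K KC (negbT aK)) x) xJ)).
case/orP: (totC _ _ IC JC) => [/subsetP IJ | /subsetP JI]; last exact: JI.
by move: (IJ a aI); rewrite (negbTE aJ).
Qed.

End GeneratingChains.

Section ChainMeasures.
Variables (T : finType) (R : realType) (v : {set T} -> R).

Definition has_chain_measure : Prop :=
  exists C mu, Sigma_chain C /\ is_mu_v_I v C mu.

Local Notation bound := (2 * \sum_(Y : {set T}) `|v Y|).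

Lemma chain_measure1_le C mu (a : T) :
  Sigma_chain C -> is_mu_v_I v C mu -> mu [set a] <= bound.
Proof.
move=> chainC [[_ muD] muv].
have [I [J [IC JC aJ defI]]] := Sigma_chain_atom chainC a.
have norm_le X : `|v X| <= \sum_(Y : {set T}) `|v Y|.
  by rewrite (bigD1 X) //= lerDl sumr_ge0.
have -> : mu [set a] = v I - v J.
  by rewrite -(muv I IC) -(muv J JC) defI muD ?disjoints1 // addrK.
have := norm_le I; have := norm_le J; have := ler_norm (v I); have := ler_norm (- v J).
rewrite normrN; lra.
Qed.

Lemma chain_measure_le C mu (A : {set T}) :
  Sigma_chain C -> is_mu_v_I v C mu -> mu A <= bound *+ #|A|.
Proof.
move=> chainC muC; rewrite (additive_sf_sum1 _ (proj1 muC)) -sumr_const.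
by apply: ler_sum => a _; apply: chain_measure1_le chainC muC.
Qed.

Local Notation w := (sup_chain_measures v).

Lemma sup_chain_measures_ge C mu (A : {set T}) :
  Sigma_chain C -> is_mu_v_I v C mu -> mu A <= w A.
Proof.
move=> chainC muC; apply: ub_le_sup; last by exists C, mu.
exists (bound *+ #|A|) => _ [C' [mu' [chainC' [muC' ->]]]].
exact: chain_measure_le chainC' muC'.
Qed.

Lemma sup_chain_measures_le (A : {set T}) (y : R) :
  has_chain_measure ->
  (forall C mu, Sigma_chain C -> is_mu_v_I v C mu -> mu A <= y) -> w A <= y.
Proof.
move=> [C [mu [chainC muC]]] le_y; apply: ge_sup; first by exists (mu A), C, mu.
by move=> _ [C' [mu' [chainC' [muC' ->]]]]; apply: le_y chainC' muC'.
Qed.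

(* [sup] of an empty set of reals is 0 *)
Lemma sup_chain_measures_out (A : {set T}) : ~ has_chain_measure -> w A = 0.
Proof.
move=> noC; apply: sup_out => -[[_ [C [mu [chainC [muC _]]]]] _].
by apply: noC; exists C, mu.
Qed.

Lemma sup_chain_measures_disjoint (A B : {set T}) :
  has_chain_measure -> A :&: B = set0 -> w (A :&: B) + w (A :|: B) <= w A + w B.
Proof.
move=> hasC AIB; rewrite AIB.
have w0 : w set0 <= 0 by apply: sup_chain_measures_le => // C mu _ [[-> _] _].
suff : w (A :|: B) <= w A + w B by lra.
apply: sup_chain_measures_le => // C mu chainC muC.
have [[_ muD] _] := muC; rewrite muD -?setI_eq0 ?AIB //.
by apply: lerD; apply: sup_chain_measures_ge chainC muC.
Qed.

Lemma sup_chain_measures_cover (A B : {set T}) :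
  has_chain_measure -> A :|: B = setT -> w (A :&: B) + w (A :|: B) <= w A + w B.
Proof.
move=> hasC AUB; rewrite AUB.
have wT : w setT <= v setT.
  by apply: sup_chain_measures_le => // C mu [_ [_ [CT _]]] [_ ->].
suff : w (A :&: B) <= w A + w B - v setT by lra.
apply: sup_chain_measures_le => // C mu chainC muC.
have [addmu muv] := muC; have [_ [_ [CT _]]] := chainC.
have := additive_sf_modular A B addmu; rewrite AUB (muv setT CT).
have := sup_chain_measures_ge A chainC muC; have := sup_chain_measures_ge B chainC muC.
lra.
Qed.

Lemma sup_chain_measures_submodular (A B : {set T}) :
  [\/ A :&: B = set0, A :|: B = setT, A \subset B | B \subset A] ->
  w (A :&: B) + w (A :|: B) <= w A + w B.
Proof.
have [hasC|noC] := classic has_chain_measure; last first.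
  by rewrite !sup_chain_measures_out ?addr0.
case=> [AIB | AUB | AB | BA].
- exact: sup_chain_measures_disjoint.
- exact: sup_chain_measures_cover.
- by rewrite modular_comparable ?AB.
- by rewrite modular_comparable ?BA ?orbT.
Qed.

End ChainMeasures.

Lemma card1_subset_or_disjoint (T : finType) (A B : {set T}) :
  #|A| = 1%N -> A \subset B \/ A :&: B = set0.
Proof.
move/eqP/cards1P => [a ->]; have [aB | aNB] := boolP (a \in B).
  by left; rewrite sub1set.
by right; apply/eqP; rewrite setI_eq0 disjoints1.
Qed.

Lemma cardC1_subset_or_cover (T : finType) (A B : {set T}) :
  #|~: A| = 1%N -> B \subset A \/ A :|: B = setT.
Proof.
case/(card1_subset_or_disjoint B) => [CAB | CAIB].
  by right; apply/eqP; rewrite eqEsubset subsetT -(setUCr A) setUS.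
by left; rewrite subsets_disjoint -setI_eq0 setIC CAIB.
Qed.

Theorem proposition21 (R : realType) (m : nat) (T : finType) (hm : #|T| = m) :
  (forall (v : {set T} -> R), (forall A, 0 <= v A) ->
     forall A B : {set T},
       (A = set0 \/ B = set0 \/ A = [set: T] \/ B = [set: T] \/
        A \subset B \/ B \subset A \/ A = B) ->
       v (A :&: B) + v (A :|: B) = v A + v B)
  /\
  (forall (v : nat -> {set T} -> R),
     (forall A, 0 <= v 0%N A) -> nondecreasing_sf (v 0%N) -> v 0%N set0 = 0 ->
     (forall (n : nat) (A : {set T}), v n.+1 A = sup_chain_measures (v n) A) ->
     forall (n : nat), (1 <= n)%N ->
     forall A B : {set T},
       (A :&: B = set0 \/ A :|: B = [set: T] \/ #|A| = 1%N \/ (#|A| + 1)%N = m) ->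
       v n (A :&: B) + v n (A :|: B) <= v n A + v n B).
Proof.
split=> [v _ A B degenerate | v _ _ _ vS [//|n] _ A B special].
  apply: modular_comparable.
  by case: degenerate => [|[|[|[|[|[|]]]]]] ->; rewrite ?sub0set ?subsetT ?subxx ?orbT.
rewrite !vS; apply: sup_chain_measures_submodular.
case: special => [AIB | [AUB | [/(card1_subset_or_disjoint B) [AB | AIB] | cardA]]].
- exact: Or41.
- exact: Or42.
- exact: Or43.
- exact: Or41.
have cardCA : #|~: A| = 1%N by move: (cardsC A); rewrite hm -cardA => /addnI.
by case: (cardC1_subset_or_cover B cardCA) => [BA | AUB]; [apply: Or44 | apply: Or42].
Qed.
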